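(* Let $r\ge2$, $1\le d<r$ and $M\in\mathrm{rep}(K_r)$. (1) $M\in\mathrm{rep}_{\mathrm{proj}}(K_r,d)$ if and only if $\mathrm{Hom}_{K_r}(C(\mathfrak w),\sigma_{K_r}(M))=(0)$ for all $\mathfrak w\in\mathrm{Gr}_{r-d}(A_r)$. (2) $M\in\mathrm{rep}_{\mathrm{proj}}(K_r,r-1)$ if and only if $\sigma_{K_r}(M)\in\mathrm{EKP}(K_r)$. (3) $\sigma_{K_r}^{-1}(\mathrm{rep}_{\mathrm{proj}}(K_r,d))\subseteq\mathrm{rep}_{\mathrm{proj}}(K_r,r-1)$. In particular, $\mathrm{rep}_{\mathrm{proj}}(K_r,d)$ is stable under $\sigma_{K_r}^{-1}$.
   Context: $k$ is algebraically closed of arbitrary characteristic; vector spaces finite-dimensional. $K_r$ is the Kronecker quiver with arrows $\gamma_1,\dots,\gamma_r:1\to2$; $A_r=\bigoplus_ik\gamma_i$; for $M=(M_1,M_2,(M(\gamma_i))_i)\in\mathrm{rep}(K_r)$, $\psi_M:A_r\otimes_kM_1\to M_2$, $\gamma_i\otimes m\mapsto M(\gamma_i)(m)$, and $\psi_{M,\mathfrak v}$ is its restriction to $\mathfrak v\otimes_kM_1$. For $e\in\{1,\dots,r\}$, $\mathrm{rep}_{\mathrm{proj}}(K_r,e)$ is the full subcategory of those $M$ with $\psi_{M,\mathfrak v}$ injective for all $\mathfrak v\in\mathrm{Gr}_e(A_r)$ (the Grassmannian of $e$-dimensional subspaces); $\mathrm{EKP}(K_r)=\mathrm{rep}_{\mathrm{proj}}(K_r,1)$.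 For $\mathfrak w\in\mathrm{Gr}_{r-d}(A_r)$, $C(\mathfrak w)=(k,A_r/\mathfrak w)$ with $C(\mathfrak w)(\gamma_i)(\lambda)=\lambda\gamma_i+\mathfrak w$. The shift functor $\sigma_{K_r}$: identify $\psi_M$ with $M_1^r\to M_2$, $(m_i)\mapsto\sum_iM(\gamma_i)(m_i)$; then $\sigma_{K_r}(M)=(\ker\psi_M,M_1)$ with $\sigma_{K_r}(M)(\gamma_i)$ the restriction to $\ker\psi_M$ of the $i$-th projection $M_1^r\to M_1$ (on morphisms $f$: componentwise $f_1$ on $\ker\psi_M$ and $f_1$). Dually $\sigma_{K_r}^{-1}(M)=(M_2,\mathrm{coker}\,\varphi)$ where $\varphi:M_1\to M_2^r$, $m\mapsto(M(\gamma_i)(m))_i$, and $\sigma_{K_r}^{-1}(M)(\gamma_i)$ is the $i$-th inclusion $M_2\to M_2^r$ followed by the projection onto $\mathrm{coker}\,\varphi$. (These are the BGP reflection functors composed with the identification of $K_r$ with its opposite quiver.) *)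

From HB Require Import structures.
From mathcomp Require Import all_boot all_algebra.
Set Implicit Arguments. Unset Strict Implicit. Unset Printing Implicit Defensive.
Import GRing.Theory.
Local Open Scope ring_scope.


(* A representation M = (M_1, M_2, (M(gamma_i))_i) of the Kronecker quiver K_r
   over the field k. *)
Record krep (k : fieldType) (r : nat) := KRep {
  kV1 : vectType k;
  kV2 : vectType k;
  karr : 'I_r -> 'Hom(kV1, kV2) }.

Section KronDefs.
Variables (k : fieldType) (r : nat).

Definition Ar := 'rV[k]_r.
Definition gam (i : 'I_r) : Ar := \row_(j < r) (j == i)%:R.

(* Quotient V/U, modelled by the complement U^C together with the
   canonical projection along U onto U^C (kernel exactly U). *)
Definition quotT (V : vectType k) (U : {vspace V}) : vectType k :=
  subvs_of (U^C)%VS.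
Definition qproj (V : vectType k) (U : {vspace V}) : 'Hom(V, quotT U) :=
  linfun (fun v : V => Subvs (memv_pi (U^C)%VS U v)).

(* A_r (x)_k M_1 is identified with M_1^r via gamma_i (x) m |-> m in slot i. *)
Definition psi (M : krep k r) : 'Hom({ffun 'I_r -> kV1 M}, kV2 M) :=
  linfun (fun m : {ffun 'I_r -> kV1 M} => \sum_(i < r) karr M i (m i)).

Definition tens1 (M : krep k r) (a : Ar) (m : kV1 M) : {ffun 'I_r -> kV1 M} :=
  [ffun i => a ord0 i *: m].

Definition tensv (M : krep k r) (v : {vspace Ar}) : {vspace {ffun 'I_r -> kV1 M}} :=
  <<[seq tens1 a m | a <- vbasis v, m <- vbasis (fullv : {vspace kV1 M})]>>%VS.

Definition rep_proj (M : krep k r) (e : nat) : Prop :=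
  forall v : {vspace Ar}, (\dim v)%N = e -> {in tensv M v &, injective (psi M)}.

Definition EKP (M : krep k r) : Prop := rep_proj M 1.

Definition Crep (w : {vspace Ar}) : krep k r :=
  @KRep k r (k^o) (quotT w)
    (fun i => linfun (fun l : k^o => qproj w (l *: gam i))).

Definition hom_zero (M N : krep k r) : Prop :=
  forall (f1 : 'Hom(kV1 M, kV1 N)) (f2 : 'Hom(kV2 M, kV2 N)),
    (forall i x, f2 (karr M i x) = karr N i (f1 x)) -> f1 = 0 /\ f2 = 0.

Definition sigma (M : krep k r) : krep k r :=
  @KRep k r (subvs_of (lker (psi M))) (kV1 M)
    (fun i => linfun (fun x : subvs_of (lker (psi M)) => (vsval x) i)).

Definition phiM (M : krep k r) : 'Hom(kV1 M, {ffun 'I_r -> kV2 M}) :=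
  linfun (fun m : kV1 M => [ffun i => karr M i m]).

Definition incl (V : vectType k) (i : 'I_r) : 'Hom(V, {ffun 'I_r -> V}) :=
  linfun (fun y : V => [ffun j => if j == i then y else 0]).

Definition sigma_inv (M : krep k r) : krep k r :=
  @KRep k r (kV2 M) (quotT (limg (phiM M)))
    (fun i => (qproj (limg (phiM M)) \o incl (kV2 M) i)%VF).

End KronDefs.

(* Identify A_r (x) M_1 with M_1^r and let c in A_r act on M_1^r by contraction,
   c.x = sum_i c_i x_i.  If w has dimension r - d and v is its orthogonal for the
   standard pairing, then v (x) M_1 is exactly the set of x killed by every c in w,
   so M is in rep_proj(K_r, d) iff no nonzero x in ker psi_M = sigma(M)_1 is killed
   by an (r - d)-dimensional w.  A morphism C(w) -> sigma(M) is the same thing as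
   such an x (the image of 1), which gives (1).  For d = r - 1, w is a line k a and
   a.x = psi_{sigma M}(a (x) x), which gives (2).  For (3), ker psi_{sigma^-1 M} is
   the image of phi_M and a.phi_M(m) = psi_M(a (x) m), so a nonzero kernel element
   killed by a would give a nonzero a (x) m in ker psi_M, which is impossible since
   rep_proj(K_r, d) is contained in rep_proj(K_r, 1). *)

From HB Require Import structures.
From mathcomp Require Import all_boot all_algebra.
From mathcomp Require Import zify.
Import GRing.Theory.
Local Open Scope ring_scope.
Set Implicit Arguments. Unset Strict Implicit. Unset Printing Implicit Defensive.

Section VectorFacts.
Variable k : fieldType.

Lemma linfunE (aT rT : vectType k) (f : aT -> rT) : linear f -> linfun f =1 f.
Proof.
move=> f_lin.
exact: (lfunE (HB.pack f (GRing.isLinear.Build k aT rT *:%R f f_lin) : {linear aT -> rT})).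
Qed.

Lemma inj_in_lfunP (aT rT : vectType k) (f : 'Hom(aT, rT)) (S : {vspace aT}) :
  {in S &, injective f} <-> (forall z, z \in S -> f z = 0 -> z = 0).
Proof.
split=> [f_inj z zS fz0 | f_ker x y xS yS fxy].
  by apply: f_inj zS (mem0v S) _; rewrite fz0 linear0.
apply/eqP; rewrite -subr_eq0; apply/eqP/f_ker; first exact: memvB.
by rewrite linearB /= fxy subrr.
Qed.

Lemma exists_subv_dim (vT : vectType k) (U : {vspace vT}) n :
  (n <= \dim U)%N -> exists2 W : {vspace vT}, (W <= U)%VS & \dim W = n.
Proof.
move=> le_n_U; exists <<take n (vbasis U)>>%VS.
  by apply/span_subvP => x /mem_take /vbasis_mem.
have free_take : free (take n (vbasis U)).
  apply: (@catl_free _ _ (drop n (vbasis U))).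
  by rewrite cat_take_drop (basis_free (vbasisP U)).
by rewrite (eqnP free_take) size_takel // size_tuple.
Qed.

Lemma dimv1P (vT : vectType k) (U : {vspace vT}) :
  reflect (exists2 b, b != 0 & U = <[b]>%VS) (\dim U == 1%N).
Proof.
apply: (iffP eqP) => [dimU1 | [b b_nz ->]]; last by rewrite dim_vline b_nz.
have pick_nz : vpick U != 0 by rewrite vpick0 -dimv_eq0 dimU1.
exists (vpick U) => //; apply/eqP; rewrite eq_sym eqEdim -memvE memv_pick /=.
by rewrite dim_vline pick_nz dimU1.
Qed.

Section Quotient.
Variables (V : vectType k) (U : {vspace V}).

Lemma qproj_sub x : x - vsval (qproj U x) \in U.
Proof.
have pi_add : daddv_pi U^C U x + daddv_pi U U^C x = x.
  by apply: daddv_pi_add; [rewrite capvC capv_compl | rewrite addvC addv_complf memvf].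
have -> : vsval (qproj U x) = daddv_pi U^C U x.
  by rewrite /qproj linfunE // => l u v; apply: val_inj; rewrite /= linearP.
by rewrite -{1}pi_add [daddv_pi U^C U x + _]addrC addrK memv_pi.
Qed.

Lemma qproj_eq0 x : (qproj U x == 0) = (x \in U).
Proof.
apply/eqP/idP => [qx0 | xU]; first by have := qproj_sub x; rewrite qx0 (linear0 vsval) subr0.
apply: val_inj; apply/eqP; rewrite linear0 -memv0 -(capv_compl U) memv_cap subvsP andbT.
by rewrite -[X in X \in U](subKr x) memvB ?qproj_sub.
Qed.

Lemma qproj_val (y : quotT U) : qproj U (vsval y) = y.
Proof.
apply: val_inj; apply/eqP; rewrite eq_sym -subr_eq0 -memv0 -(capv_compl U) memv_cap.
by rewrite qproj_sub memvB ?subvsP.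
Qed.

End Quotient.
End VectorFacts.

Section Annihilator.
Variables (k : fieldType) (r : nat).
Local Notation Ar := (Ar k r).
Implicit Types (a b c : Ar) (w : {vspace Ar}).

Definition dotv a b : k := \sum_i a ord0 i * b ord0 i.

Lemma dotv_is_bilinear : bilinear_for
  (GRing.Scale.Law.clone _ _ *%R _) (GRing.Scale.Law.clone _ _ *%R _) dotv.
Proof.
split=> [b|a] l u v; rewrite /dotv /= mulr_sumr -big_split; apply: eq_bigr => i _.
  by rewrite !mxE mulrDl mulrA.
by rewrite !mxE mulrDr mulrCA.
Qed.

HB.instance Definition _ :=
  bilinear_isBilinear.Build k Ar Ar k _ _ dotv dotv_is_bilinear.

Lemma dotvC a b : dotv a b = dotv b a.
Proof. by apply: eq_bigr => i _; rewrite mulrC. Qed.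

Lemma dotv_gam a i : dotv a (gam k i) = a ord0 i.
Proof.
rewrite /dotv (bigD1 i) //= big1 => [|j ji]; first by rewrite mxE eqxx mulr1 addr0.
by rewrite mxE (negbTE ji) mulr0.
Qed.

Lemma dimAr : \dim {:Ar} = r.
Proof. by rewrite dimvf /Ar dim_matrix mul1r. Qed.

Lemma dimv_le_r w : (\dim w <= r)%N.
Proof. by have := dimvS (subvf w); rewrite dimAr. Qed.

Definition dotv_basis w : 'Hom(Ar, 'rV[k]_(\dim w)) :=
  linfun (fun a => \row_(j < \dim w) dotv a (vbasis w)`_j).

Definition perp w : {vspace Ar} := lker (dotv_basis w).

Lemma dotv_basisE w a : dotv_basis w a = \row_(j < \dim w) dotv a (vbasis w)`_j.
Proof. by rewrite linfunE // => l u v; apply/rowP => j; rewrite !mxE linearPl. Qed.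

Lemma mem_perp w a : reflect {in w, forall b, dotv a b = 0} (a \in perp w).
Proof.
rewrite memv_ker dotv_basisE; apply: (iffP eqP) => [a_w b /coord_vbasis -> | a_w].
  rewrite linear_sumr big1 // => j _; rewrite linearZr_LR /=.
  by have /rowP/(_ j) := a_w; rewrite !mxE => ->; rewrite mulr0.
by apply/rowP => j; rewrite !mxE a_w // vbasis_mem ?mem_nth ?size_tuple.
Qed.

Lemma perp_full : perp fullv = 0%VS.
Proof.
apply/eqP; rewrite -subv0; apply/subvP => a /mem_perp a_full; rewrite memv0.
by apply/eqP/rowP => i; rewrite mxE -[LHS]/(a ord0 i) -dotv_gam a_full ?memvf.
Qed.

Lemma perp_cap w w' : (perp w :&: perp w' <= perp (w + w'))%VS.
Proof.
apply/subvP => a /memv_capP [/mem_perp a_w /mem_perp a_w'].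
by apply/mem_perp => _ /memv_addP [u uw [v vw' ->]]; rewrite linearDr /= a_w ?a_w' ?addr0.
Qed.

Lemma dim_perp_ge w : (r - \dim w <= \dim (perp w))%N.
Proof.
have img_le : (\dim (limg (dotv_basis w)) <= \dim w)%N.
  by have := dimvS (subvf (limg (dotv_basis w))); rewrite dimvf /dim /= mul1n.
have ker_img : (\dim (perp w) + \dim (limg (dotv_basis w)))%N = r.
  by have := limg_ker_dim (dotv_basis w) fullv; rewrite capfv dimAr; apply.
lia.
Qed.

Lemma dim_perp w : \dim (perp w) = (r - \dim w)%N.
Proof.
have perp_indep : (perp w :&: perp w^C = 0)%VS.
  by apply/eqP; rewrite -subv0 -perp_full -(addv_complf w) perp_cap.
have := dimv_sum_cap (perp w) (perp w^C); rewrite perp_indep dimv0 addn0.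
have := dim_perp_ge w^C; rewrite dimv_compl dimAr.
have := dimv_le_r (perp w + perp w^C); have := dim_perp_ge w; have := dimv_le_r w.
lia.
Qed.

Lemma perpK w : perp (perp w) = w.
Proof.
apply/esym/eqP; rewrite eqEdim dim_perp dim_perp subKn ?dimv_le_r // leqnn andbT.
by apply/subvP => b bw; apply/mem_perp => a /mem_perp a_w; rewrite dotvC a_w.
Qed.

End Annihilator.

Section Contraction.
Variables (k : fieldType) (r : nat).
Local Notation Ar := (Ar k r).

Definition contr (V : vectType k) (c : Ar) (x : {ffun 'I_r -> V}) : V :=
  \sum_i c ord0 i *: x i.

Lemma contr_is_bilinear (V : vectType k) : bilinear_for
  (GRing.Scale.Law.clone _ _ *:%R _) (GRing.Scale.Law.clone _ _ *:%R _) (@contr V).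
Proof.
split=> [x|c] l u v; rewrite /contr /= scaler_sumr -big_split; apply: eq_bigr => i _.
  by rewrite !mxE scalerDl scalerA.
by rewrite !ffunE scalerDr !scalerA mulrC.
Qed.

HB.instance Definition _ (V : vectType k) :=
  bilinear_isBilinear.Build k Ar {ffun 'I_r -> V} V _ _ (@contr V) (contr_is_bilinear V).
HB.instance Definition _ (V : vectType k) c :=
  GRing.isLinear.Build k _ _ _ (@contr V c) ((contr_is_bilinear V).2 c).

Lemma contr_gam (V : vectType k) i (x : {ffun 'I_r -> V}) : contr (gam k i) x = x i.
Proof.
rewrite /contr (bigD1 i) //= big1 => [|j ji]; first by rewrite mxE eqxx scale1r addr0.
by rewrite mxE (negbTE ji) scale0r.
Qed.

Lemma row_sum_gam (c : Ar) : c = \sum_i c ord0 i *: gam k i.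
Proof.
apply/rowP => j; rewrite summxE (bigD1 j) //= big1 => [|i ij].
  by rewrite !mxE eqxx mulr1 addr0 (ord1 0).
by rewrite !mxE eq_sym (negbTE ij) mulr0.
Qed.

End Contraction.

Section Tensor.
Variables (k : fieldType) (r : nat) (M : krep k r).
Local Notation Ar := (Ar k r).
Local Notation V := (kV1 M).

Lemma tens1_is_bilinear : bilinear_for
  (GRing.Scale.Law.clone _ _ *:%R _) (GRing.Scale.Law.clone _ _ *:%R _) (@tens1 k r M).
Proof.
split=> [m|a] l u v; apply/ffunP => i; rewrite !ffunE.
  by rewrite !mxE scalerDl scalerA.
by rewrite scalerDr !scalerA mulrC.
Qed.

HB.instance Definition _ :=
  bilinear_isBilinear.Build k Ar V {ffun 'I_r -> V} _ _ (@tens1 k r M) tens1_is_bilinear.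
HB.instance Definition _ a :=
  GRing.isLinear.Build k _ _ _ (@tens1 k r M a) (tens1_is_bilinear.2 a).

Lemma contr_tens1 (c a : Ar) (m : V) : contr c (tens1 a m) = dotv c a *: m.
Proof. by rewrite /contr /dotv scaler_suml; apply: eq_bigr => i _; rewrite ffunE scalerA. Qed.

Lemma tens1_eq0 (a : Ar) (m : V) : a != 0 -> tens1 a m = 0 -> m = 0.
Proof.
move=> a_nz /ffunP am0; have [i a_i] : exists i, a ord0 i != 0.
  apply/existsP; apply: contraNT a_nz => /existsPn a0; apply/eqP/rowP => j.
  by rewrite mxE; apply/eqP/negbNE/a0.
by move: (am0 i); rewrite !ffunE => /eqP; rewrite scaler_eq0 (negbTE a_i) => /eqP.
Qed.

Lemma mem_tens1 (v : {vspace Ar}) (a : Ar) (m : V) :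
  a \in v -> tens1 a m \in tensv M v.
Proof.
move=> av; rewrite (coord_vbasis av) (coord_vbasis (memvf m)) linear_sumlz.
apply: memv_suml => j _; rewrite linearZl_LR linear_sum; apply: memvZ.
apply: memv_suml => l _; rewrite linearZ; apply/memvZ/memv_span.
by apply: allpairs_f; apply: mem_nth; rewrite size_tuple.
Qed.

Local Notation e := (vbasis {:V}).

Definition tcoord (x : {ffun 'I_r -> V}) (l : 'I_(\dim {:V})) : Ar :=
  \row_i coord e l (x i).

Lemma tcoordK x : \sum_l tens1 (tcoord x l) e`_l = x.
Proof.
apply/ffunP => i; rewrite sum_ffunE [RHS](coord_vbasis (memvf (x i))).
by apply: eq_bigr => l _; rewrite !ffunE mxE.
Qed.

Lemma dotv_tcoord c x l : dotv c (tcoord x l) = coord e l (contr c x).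
Proof. by rewrite /contr linear_sum; apply: eq_bigr => i _; rewrite linearZ mxE. Qed.

Lemma tcoord_mem (v : {vspace Ar}) x l :
  {in perp v, forall c, contr c x = 0} -> tcoord x l \in v.
Proof.
by move=> x_ann; rewrite -(perpK v); apply/mem_perp => c /x_ann cx0;
  rewrite dotvC dotv_tcoord cx0 linear0.
Qed.

Lemma mem_tensvP (v : {vspace Ar}) x :
  reflect {in perp v, forall c, contr c x = 0} (x \in tensv M v).
Proof.
apply: (iffP idP) => [x_v c c_perp | x_ann]; last first.
  by rewrite -(tcoordK x); apply: memv_suml => l _; apply/mem_tens1/tcoord_mem.
have /subvP/(_ x x_v) : (tensv M v <= lker (linfun (contr c)))%VS.
  apply/span_subvP => _ /allpairsP [[a m] [a_v _ ->]].
  rewrite memv_ker lfunE /= contr_tens1.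
  by move/mem_perp: c_perp => ->; rewrite ?scale0r ?vbasis_mem.
by rewrite memv_ker lfunE => /eqP.
Qed.

Lemma tensv_line (b : Ar) x : x \in tensv M <[b]>%VS -> exists m, x = tens1 b m.
Proof.
move=> /mem_tensvP/tcoord_mem x_b.
have /fin_all_exists [mu tcoord_mu] : forall l, exists mu : k, tcoord x l = mu *: b.
  by move=> l; apply/vlineP/x_b.
exists (\sum_l mu l *: e`_l); rewrite linear_sum -[LHS]tcoordK.
by apply: eq_bigr => l _; rewrite tcoord_mu linearZl_LR linearZ.
Qed.

End Tensor.

Section KernelAnnihilators.
Variables (k : fieldType) (r : nat).
Local Notation Ar := (Ar k r).
Implicit Types (M : krep k r) (w : {vspace Ar}).

Definition ann_ker_trivial M w : Prop :=
  forall x, x \in lker (psi M) -> {in w, forall c, contr c x = 0} -> x = 0.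

Lemma ann_ker_trivialS M w w' :
  (w <= w')%VS -> ann_ker_trivial M w -> ann_ker_trivial M w'.
Proof.
by move=> /subvP sww' Mw x x_ker x_ann; apply: Mw x_ker _ => c /sww'; apply: x_ann.
Qed.

Lemma ann_ker_trivial_line M a :
  ann_ker_trivial M <[a]>%VS <->
  (forall x, x \in lker (psi M) -> contr a x = 0 -> x = 0).
Proof.
split=> Ma x x_ker ax0; apply: Ma x_ker _; last exact: ax0 (memv_line a).
by move=> _ /vlineP [mu ->]; rewrite linearZl_LR /= ax0 scaler0.
Qed.

Lemma rep_projE M e : (e <= r)%N ->
  rep_proj M e <-> forall w, \dim w = (r - e)%N -> ann_ker_trivial M w.
Proof.
move=> le_e_r; split=> [M_e w dim_w x x_ker x_ann | M_e v dim_v].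
  have dim_perp_w : \dim (perp w) = e by rewrite dim_perp dim_w subKn.
  apply: (proj1 (inj_in_lfunP _ _) (M_e _ dim_perp_w)); last by apply/eqP; rewrite -memv_ker.
  by apply/mem_tensvP; rewrite perpK.
apply/inj_in_lfunP => x x_v psi_x0; apply: (M_e (perp v)).
- by rewrite dim_perp dim_v.
- by rewrite memv_ker psi_x0.
- exact/mem_tensvP.
Qed.

Lemma rep_proj_le M e e' : (e' <= e <= r)%N -> rep_proj M e -> rep_proj M e'.
Proof.
case/andP=> le_e'_e le_e_r; rewrite !rep_projE ?(leq_trans le_e'_e) // => M_e w dim_w.
have [W sWw dim_W] : exists2 W, (W <= w)%VS & \dim W = (r - e)%N.
  by apply: exists_subv_dim; rewrite dim_w leq_sub2l.
exact: ann_ker_trivialS sWw (M_e W dim_W).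
Qed.

Lemma rep_proj_lines M : (0 < r)%N ->
  rep_proj M (r - 1) <-> forall a, a != 0 -> ann_ker_trivial M <[a]>%VS.
Proof.
move=> r_gt0; rewrite rep_projE ?leq_subr // subKn //.
split=> [M_lines a a_nz | M_lines w /eqP/dimv1P [a a_nz ->]]; last exact: M_lines.
by apply: M_lines; rewrite dim_vline a_nz.
Qed.

End KernelAnnihilators.

Section ShiftFunctors.
Variables (k : fieldType) (r : nat).
Local Notation Ar := (Ar k r).
Implicit Types (M : krep k r) (w : {vspace Ar}).

Lemma psiE M x : psi M x = \sum_i karr M i (x i).
Proof.
rewrite /psi linfunE // => l u v; rewrite scaler_sumr -big_split /=.
by apply: eq_bigr => i _; rewrite !ffunE linearP.
Qed.

Lemma sigma_arrE M i (x : subvs_of (lker (psi M))) : karr (sigma M) i x = vsval x i.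
Proof. by rewrite /= linfunE // => l u v; rewrite linearP /= !ffunE. Qed.

Lemma Crep_arrE w i (l : k) : karr (Crep w) i l = qproj w (l *: gam k i).
Proof. by rewrite /= linfunE // => l1 u v; rewrite -linearP /= scalerDl scalerA. Qed.

Lemma contr_hom_Crep_sigma M w
    (f1 : 'Hom(kV1 (Crep w), kV1 (sigma M))) (f2 : 'Hom(kV2 (Crep w), kV2 (sigma M))) :
  (forall i l, f2 (karr (Crep w) i l) = karr (sigma M) i (f1 l)) ->
  forall c, contr c (vsval (f1 1)) = f2 (qproj w c).
Proof.
move=> f_hom c; rewrite (row_sum_gam c) linear_sumlz !linear_sum /=.
apply: eq_bigr => i _; rewrite linearZl_LR !linearZ /= contr_gam.
by rewrite -[gam k i]scale1r -Crep_arrE f_hom sigma_arrE.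
Qed.

Lemma hom_zero_Crep_sigma M w :
  hom_zero (Crep w) (sigma M) <-> ann_ker_trivial M w.
Proof.
split=> [hom0 x x_ker x_ann | Mw f1 f2 f_hom].
  pose u : kV1 (sigma M) := Subvs x_ker.
  pose f1 : 'Hom(k^o, kV1 (sigma M)) := linfun (fun l : k^o => l *: u).
  pose f2 : 'Hom(quotT w, kV1 M) := linfun (fun y : quotT w => contr (vsval y) x).
  have f1E l : f1 l = l *: u.
    by rewrite linfunE // => l1 a b; rewrite /= scalerDl scalerA.
  have f2E y : f2 y = contr (vsval y) x.
    by rewrite linfunE // => l1 a b; rewrite linearP /= linearPl.
  have f_hom i l : f2 (karr (Crep w) i l) = karr (sigma M) i (f1 l).
    rewrite f2E f1E sigma_arrE Crep_arrE.
    have /x_ann := qproj_sub w (l *: gam k i); rewrite linearBl /= => /subr0_eq <-.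
    by rewrite linearZl_LR /= contr_gam ffunE.
  have [f1_0 _] := hom0 f1 f2 f_hom.
  by have /(congr1 vsval) := f1E 1; rewrite f1_0 zero_lfunE scale1r linear0.
pose x := vsval (f1 1); have x_contr := contr_hom_Crep_sigma f_hom.
have x0 : x = 0.
  apply: Mw; first exact: subvsP.
  by move=> c c_w; rewrite x_contr (eqP (_ : qproj w c == 0)) ?linear0 ?qproj_eq0.
have f1_1 : f1 1 = 0 by apply/val_inj; rewrite /= -/x x0.
split; apply/lfunP; [move=> l | move=> y]; rewrite zero_lfunE.
  by rewrite -[l]mulr1 -[l * 1]/(l *: (1 : k^o)) linearZ /= f1_1 scaler0.
by rewrite -(qproj_val y) -x_contr -/x x0 linear0.
Qed.

Lemma psi_sigma_tens1 M (a : Ar) (u : kV1 (sigma M)) :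
  psi (sigma M) (tens1 a u) = contr a (vsval u).
Proof.
by rewrite psiE; apply: eq_bigr => i _; rewrite sigma_arrE ffunE linearZ /= ffunE.
Qed.

Lemma EKP_sigma M :
  EKP (sigma M) <-> forall a, a != 0 -> ann_ker_trivial M <[a]>%VS.
Proof.
split=> [EKP_sM a a_nz | M_lines v /eqP/dimv1P [b b_nz ->]].
  apply/ann_ker_trivial_line => x x_ker ax0; pose u : kV1 (sigma M) := Subvs x_ker.
  have dim_a : \dim <[a]>%VS = 1%N by rewrite dim_vline a_nz.
  have /inj_in_lfunP/(_ (tens1 a u)) := EKP_sM _ dim_a.
  rewrite psi_sigma_tens1 mem_tens1 ?memv_line // => /(_ isT ax0) /(tens1_eq0 a_nz).
  by move/(congr1 vsval); rewrite linear0.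
apply/inj_in_lfunP => _ /tensv_line [u ->]; rewrite psi_sigma_tens1 => bu0.
have /ann_ker_trivial_line/(_ _ (subvsP u) bu0) u0 := M_lines b b_nz.
suff -> : u = 0 by rewrite linear0.
by apply/val_inj; rewrite /= u0.
Qed.

Lemma sum_incl (V : vectType k) (x : {ffun 'I_r -> V}) : \sum_i incl V i (x i) = x.
Proof.
have inclE i (y : V) : incl V i y = [ffun j => if j == i then y else 0].
  rewrite linfunE // => l u v; apply/ffunP => j; rewrite !ffunE.
  by case: eqP; rewrite ?scaler0 ?addr0.
apply/ffunP => j; rewrite sum_ffunE (bigD1 j) //= big1 => [|i ij].
  by rewrite inclE ffunE eqxx addr0.
by rewrite inclE ffunE eq_sym (negbTE ij).
Qed.

Lemma psi_sigma_invE M x : psi (sigma_inv M) x = qproj (limg (phiM M)) x.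
Proof.
by rewrite psiE -{2}(sum_incl x) linear_sum; apply: eq_bigr => i _; rewrite comp_lfunE.
Qed.

Lemma lker_psi_sigma_inv M : lker (psi (sigma_inv M)) = limg (phiM M).
Proof. by apply/vspaceP => x; rewrite memv_ker psi_sigma_invE qproj_eq0. Qed.

Lemma contr_phiM M (a : Ar) m : contr a (phiM M m) = psi M (tens1 a m).
Proof.
rewrite psiE /phiM linfunE => [|l u v]; last by apply/ffunP => i; rewrite !ffunE linearP.
by apply: eq_bigr => i _; rewrite !ffunE linearZ.
Qed.

Lemma ann_ker_trivial_sigma_inv M :
  rep_proj M 1 -> forall a, a != 0 -> ann_ker_trivial (sigma_inv M) <[a]>%VS.
Proof.
move=> M_1 a a_nz; apply/ann_ker_trivial_line => x.
rewrite lker_psi_sigma_inv => /memv_imgP [m _ ->]; rewrite contr_phiM => psi_am0.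
have dim_a : \dim <[a]>%VS = 1%N by rewrite dim_vline a_nz.
have /inj_in_lfunP/(_ (tens1 a m)) := M_1 _ dim_a.
by rewrite mem_tens1 ?memv_line // => /(_ isT psi_am0) /(tens1_eq0 a_nz) ->; rewrite linear0.
Qed.

End ShiftFunctors.

Theorem theorem2p2p3 (k : closedFieldType) (r d : nat) :
  (2 <= r)%N -> (1 <= d)%N -> (d < r)%N ->
  (forall M : krep k r,
     rep_proj M d <->
     (forall w : {vspace Ar k r}, \dim w = (r - d)%N -> hom_zero (Crep w) (sigma M)))
  /\ (forall M : krep k r, rep_proj M (r - 1) <-> EKP (sigma M))
  /\ (forall M : krep k r, rep_proj M d -> rep_proj (sigma_inv M) (r - 1))
  /\ (forall M : krep k r, rep_proj M d -> rep_proj (sigma_inv M) d).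
Proof.
move=> r_ge2 d_gt0 d_lt_r; have r_gt0 : (0 < r)%N by lia.
have sigma_inv_r1 (M : krep k r) : rep_proj M d -> rep_proj (sigma_inv M) (r - 1).
  move=> M_d; apply/(rep_proj_lines _ r_gt0)/ann_ker_trivial_sigma_inv.
  by apply: rep_proj_le M_d; rewrite d_gt0 ltnW.
split; [|split; [|split]] => // M.
- apply: iff_trans (rep_projE M (ltnW d_lt_r)) _.
  by split=> M_d w /M_d /hom_zero_Crep_sigma.
- exact: iff_trans (rep_proj_lines M r_gt0) (iff_sym (EKP_sigma M)).
- move=> /sigma_inv_r1; apply: rep_proj_le; rewrite leq_subr andbT; lia.
Qed.
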